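(* Let $m\ge5$ with $m\equiv1\pmod4$, let $N=3^m-1$ and $v=\frac{3^m-1}{2}+3^{(m-1)/2}-1$. Then $\gcd(v,N)=1$, and for every integer $i$ with $0\le i\le\frac{3^{(m-1)/2}-1}{4}+2$, the $3$-weight of $v(1+2i)\bmod N$ is congruent to $1$ modulo $4$ (i.e. the $3$-adic digit vector of $v(1+2i)\bmod N$ lies in $S_1(m)$).
   Context: For an integer $i$, $i\bmod N$ is the unique $s\in\{0,\dots,N-1\}$ with $N\mid i-s$. For $0\le s\le 3^m-1$ with $3$-adic expansion $s=\sum_{j=0}^{m-1}s_j3^j$, $s_j\in\{0,1,2\}$, the $3$-weight is $\mathrm{wt}_3(s)=\sum_j s_j$. $S_j(m)=\{(i_0,\dots,i_{m-1})\in\{0,1,2\}^m:\sum i_k\equiv j\pmod 4\}$. *)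

From mathcomp Require Import all_boot.

Definition digit3 (s j : nat) : nat := (s %/ 3 ^ j) %% 3.

Definition wt3 (m s : nat) : nat := \sum_(j < m) digit3 s j.

From mathcomp Require Import all_boot.
From mathcomp Require Import zify ring.

(* Write m = 2k + 1 with k = (m - 1)/2 even, and h = 3^k = 4s + 1.  Then
   N = 3h^2 - 1 and v = N/2 + (h - 1), so for odd multipliers
   v(2i + 1) = iN + N/2 + (2i + 1)(h - 1), and for i <= s + 2 the residue is
   x = N/2 + (2i + 1)(h - 1) itself.  Read in base h, x has three digits
   (low, middle, top) with top digit 1 or 2: for i < s the low and middle
   digits add up to h - 1, so their 3-weights add up to 2k and the total is
   2k + 1; the three boundary values i = s, s + 1, s + 2 give 4k + 1, 2k + 1
   and 2k + 1.  Both are 1 modulo 4 since k is even.  Coprimality follows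
   from 2v = N + 8s and v = 8s(3s + 2) + 1. *)

Lemma wt3_nil a : wt3 0 a = 0.
Proof. by rewrite /wt3 big_ord0. Qed.

Lemma wt3S n a : wt3 n.+1 a = a %% 3 + wt3 n (a %/ 3).
Proof.
rewrite /wt3 big_ord_recl /digit3 expn0 divn1; congr (_ + _).
by apply: eq_bigr => j _; rewrite /= expnS divnMA.
Qed.

Lemma wt3_0 n : wt3 n 0 = 0.
Proof. by elim: n => [|n IH]; rewrite ?wt3_nil // wt3S div0n IH. Qed.

Lemma wt3_small n a : a < 3 -> wt3 n.+1 a = a.
Proof. by move=> a_lt3; rewrite wt3S modn_small // divn_small // wt3_0 addn0. Qed.

Lemma wt3_add_mul n p a b : a < 3 ^ n ->
  wt3 (n + p) (a + 3 ^ n * b) = wt3 n a + wt3 p b.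
Proof.
elim: n a => [|n IH] a a_lt.
  by move: a_lt; rewrite expn0 ltnS leqn0 => /eqP->; rewrite wt3_nil mul1n.
rewrite addSn !wt3S expnS -mulnA in a_lt *.
have -> : (a + 3 * (3 ^ n * b)) %% 3 = a %% 3 by lia.
have -> : (a + 3 * (3 ^ n * b)) %/ 3 = a %/ 3 + 3 ^ n * b by lia.
by rewrite IH ?addnA //; lia.
Qed.

Lemma wt3_pad n p a : n <= p -> a < 3 ^ n -> wt3 p a = wt3 n a.
Proof.
move=> /subnKC <- a_lt.
by rewrite -[a in LHS]addn0 -(muln0 (3 ^ n)) wt3_add_mul // wt3_0 addn0.
Qed.

Lemma wt3_compl n a b : a + b + 1 = 3 ^ n -> wt3 n a + wt3 n b = 2 * n.
Proof.
elim: n a b => [|n IH] a b; first by rewrite wt3_nil wt3_nil.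
rewrite !wt3S expnS => Eab.
(* the ternary digits of a and b add up to 2 position by position *)
have := IH (a %/ 3) (b %/ 3) ltac:(lia); lia.
Qed.

Lemma wt3_blocks k a b c : a < 3 ^ k -> b < 3 ^ k -> c < 3 ->
  wt3 (k + (k + 1)) (a + 3 ^ k * (b + 3 ^ k * c)) = wt3 k a + wt3 k b + c.
Proof.
by move=> a_lt b_lt c_lt; rewrite !wt3_add_mul // wt3_small // addnA.
Qed.

Lemma expn3_even_mod4 t : 3 ^ (2 * t) %% 4 = 1.
Proof. by rewrite expnM -modnXm exp1n. Qed.

Lemma gcd_v_N s : gcdn (24 * s * s + 16 * s + 1) (48 * s * s + 24 * s + 2) = 1.
Proof.
apply/eqP; rewrite -dvdn1; set d := gcdn _ _.
have d_v := dvdn_gcdl (24 * s * s + 16 * s + 1) (48 * s * s + 24 * s + 2).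
have d_N := dvdn_gcdr (24 * s * s + 16 * s + 1) (48 * s * s + 24 * s + 2).
have d_8s : d %| 8 * s.
  rewrite -(dvdn_addr _ d_N).
  have -> : 48 * s * s + 24 * s + 2 + 8 * s = 2 * (24 * s * s + 16 * s + 1) by ring.
  exact: dvdn_mull.
rewrite -(dvdn_addr 1 (dvdn_mulr (3 * s + 2) d_8s)).
by have <- : 24 * s * s + 16 * s + 1 = 8 * s * (3 * s + 2) + 1 by ring.
Qed.

Definition residue s i := 24 * s * s + 12 * s + 1 + (2 * i + 1) * (4 * s).

Lemma mul_v_mod_N s i : i <= s + 2 ->
  ((24 * s * s + 16 * s + 1) * (1 + 2 * i)) %% (48 * s * s + 24 * s + 2)
  = residue s i.
Proof.
move=> i_le.
have -> : (24 * s * s + 16 * s + 1) * (1 + 2 * i)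
          = i * (48 * s * s + 24 * s + 2) + residue s i by rewrite /residue; ring.
rewrite modnMDl modn_small // /residue.
have : (2 * i + 1) * (4 * s) <= (2 * s + 5) * (4 * s) by rewrite leq_mul2r; lia.
have : s <= s * s by case: (s) => // n; rewrite mulSn leq_addr.
move: ((2 * i + 1) * (4 * s)) => y.
have -> : (2 * s + 5) * (4 * s) = 8 * (s * s) + 20 * s by ring.
by rewrite -!mulnA; move: (s * s) => X; lia.
Qed.

Section ResidueWeight.

Context {k s : nat}.
Hypothesis k_ge2 : 2 <= k.
Hypothesis h_def : 3 ^ k = 4 * s + 1.

Let s_gt0 : 0 < s.
Proof. by have := leq_pexp2l (isT : 0 < 3) k_ge2; rewrite h_def [3 ^ 2]/=; lia. Qed.

Lemma wt3_residue_lt i : i < s -> wt3 (k + (k + 1)) (residue s i) = 2 * k + 1.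
Proof.
move=> i_lt; have [c Ec] : exists c, s = i + 1 + c by exists (s - i - 1); lia.
have -> : residue s i = (2 * c + 1) + 3 ^ k * ((4 * i + 2 * c + 3) + 3 ^ k * 1).
  by rewrite h_def /residue Ec; ring.
rewrite wt3_blocks ?h_def //; try lia.
by rewrite wt3_compl // h_def; lia.
Qed.

Lemma wt3_residue_s : wt3 (k + (k + 1)) (residue s s) = 4 * k + 1.
Proof.
have -> : residue s s = 4 * s + 3 ^ k * (4 * s + 3 ^ k * 1).
  by rewrite h_def /residue; ring.
rewrite wt3_blocks ?h_def //; try lia.
have := wt3_compl k 0 (4 * s) ltac:(by rewrite h_def; lia).
by rewrite wt3_0; lia.
Qed.

Lemma wt3_residue_s1 : wt3 (k + (k + 1)) (residue s (s + 1)) = 2 * k + 1.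
Proof.
have [r Er] : exists r, s = r + 1 by exists (s - 1); lia.
have -> : residue s (s + 1) = (4 * r + 2) + 3 ^ k * (1 + 3 ^ k * 2).
  by rewrite h_def /residue Er; ring.
rewrite wt3_blocks ?h_def //; try lia.
have := wt3_compl k 2 (4 * r + 2) ltac:(by rewrite h_def; lia).
by rewrite (wt3_pad _ _ 1 k_ge2) // (wt3_pad _ _ 2 k_ge2) // !wt3_small //; lia.
Qed.

Lemma wt3_residue_s2 : wt3 (k + (k + 1)) (residue s (s + 2)) = 2 * k + 1.
Proof.
have [r Er] : exists r, s = r + 1 by exists (s - 1); lia.
have -> : residue s (s + 2) = 4 * r + 3 ^ k * (3 + 3 ^ k * 2).
  by rewrite h_def /residue Er; ring.
rewrite wt3_blocks ?h_def //; try lia.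
have := wt3_compl k 4 (4 * r) ltac:(by rewrite h_def; lia).
by rewrite (wt3_pad _ _ 3 k_ge2) // (wt3_pad _ _ 4 k_ge2) // !wt3S wt3_nil; lia.
Qed.

Lemma wt3_residue i : i <= s + 2 ->
  wt3 (k + (k + 1)) (residue s i) \in [:: 2 * k + 1; 4 * k + 1].
Proof.
rewrite !inE; case: (ltnP i s) => [/wt3_residue_lt -> | s_le i_le]; first by rewrite eqxx.
have [-> | [-> | ->]] : i = s \/ i = s + 1 \/ i = s + 2 by lia.
- by rewrite wt3_residue_s eqxx orbT.
- by rewrite wt3_residue_s1 eqxx.
- by rewrite wt3_residue_s2 eqxx.
Qed.

End ResidueWeight.

Theorem lemma40 (m : nat) :
  5 <= m -> m %% 4 = 1 ->
  let N := 3 ^ m - 1 in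
  let v := (3 ^ m - 1) %/ 2 + 3 ^ ((m - 1) %/ 2) - 1 in
  gcdn v N = 1 /\
  (forall i : nat, i <= (3 ^ ((m - 1) %/ 2) - 1) %/ 4 + 2 ->
     wt3 m ((v * (1 + 2 * i)) %% N) %% 4 = 1).
Proof.
move=> m_ge5 m_mod4 N v.
have [t [t_gt0 Em]] : exists t, 0 < t /\ m = 4 * t + 1 by exists (m %/ 4); lia.
have Ek : (m - 1) %/ 2 = 2 * t by lia.
have [s h_def] : exists s, 3 ^ (2 * t) = 4 * s + 1.
  by exists (3 ^ (2 * t) %/ 4); rewrite {1}(divn_eq (3 ^ (2 * t)) 4) expn3_even_mod4 mulnC.
have E3m : 3 ^ m = 3 * (4 * s + 1) * (4 * s + 1).
  by rewrite Em -h_def -expnS -expnD; congr (3 ^ _); lia.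
have EN : N = 48 * s * s + 24 * s + 2.
  by rewrite /N E3m -(addnK 1 (48 * s * s + 24 * s + 2)); congr (_ - 1); ring.
have Ev : v = 24 * s * s + 16 * s + 1.
  by rewrite /v -/N EN Ek h_def -!mulnA; move: (s * s) => X; lia.
have Ebound : (3 ^ (2 * t) - 1) %/ 4 + 2 = s + 2 by rewrite h_def; lia.
rewrite Ek Ebound EN Ev; split; first exact: gcd_v_N.
move=> i i_le; rewrite mul_v_mod_N //.
have k_ge2 : 2 <= 2 * t by lia.
have := wt3_residue k_ge2 h_def _ i_le.
have -> : m = 2 * t + (2 * t + 1) by lia.
by rewrite !inE => /orP[] /eqP ->; lia.
Qed.
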